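(* Let $G$ be a graph of girth at least $7$ with vertex order $v_1,\ldots,v_n$, let $D$ be a minimal dominating set of $G$, let $u,w\in D$ be adjacent, let $v\in P_D(u)$, and let $X_{uv}$, $D^*$, $Z_{uv}$ be as in the context. Then $X_{uv}=P_D(u)\setminus\{v\}$, and each vertex of $Z_{uv}$ has at most one neighbor in $\bigcup_{x\in X_{uv}\cup\{v\}}P_{D^*}(x)\setminus N[u]$.
   Context: Graphs are finite, simple, undirected; girth is the length of a shortest cycle. $N(x)$ is the open and $N[x]=N(x)\cup\{x\}$ the closed neighborhood, $N[S]=\bigcup_{x\in S}N[x]$. A dominating set is $D\subseteq V(G)$ with $N[D]=V(G)$; minimal if no proper subset is dominating. For a dominating set $D$ and $x\in D$, a vertex $y$ is private for $x$ if $y\in N[x]\setminus N[D\setminus\{x\}]$; $P_D[x]$ is the set of such $y$ and $P_D(x)=P_D[x]\cap N(x)$. Fix an order $v_1,\ldots,v_n$ of $V(G)$. Greedy removal from a dominating set $D'$: while the current set $S$ is not a minimal dominating set, remove from $S$ the vertex $v_i$ of smallest index such that $S\setminus\{v_i\}$ is still dominating. Given $D,u,v$: $X_{uv}$ is built by starting from $\emptyset$ and repeatedly adding the smallest-index vertex of $P_D(u)\setminus N[\{v\}\cup X_{uv}]$ while this set is nonempty. Let $D'=(D\setminus\{u\})\cup X_{uv}\cup\{v\}$, let $D^*$ be the result of greedy removal from $D'$, and $Z_{uv}=D'\setminus D^*$. *)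

(* Vertices are 'I_n; the vertex order v_1,...,v_n is the
   natural order of ordinals (v_{i+1} = ordinal i). *)
From mathcomp Require Import all_boot.
Set Implicit Arguments. Unset Strict Implicit. Unset Printing Implicit Defensive.

Section Defs.
Variable n : nat.
Variable e : rel 'I_n.

Definition simple_graph := symmetric e /\ irreflexive e.

Definition girth_ge (g : nat) :=
  forall s : seq 'I_n, uniq s -> 3 <= size s -> cycle e s -> g <= size s.

Definition onbhd (x : 'I_n) : {set 'I_n} := [set y | e x y].
Definition cnbhd (x : 'I_n) : {set 'I_n} := x |: onbhd x.
Definition cnbhdS (S : {set 'I_n}) : {set 'I_n} := \bigcup_(x in S) cnbhd x.

Definition dominating (D : {set 'I_n}) := cnbhdS D == [set: 'I_n].
Definition minimal_dominating (D : {set 'I_n}) :=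
  dominating D /\ forall S : {set 'I_n}, S \proper D -> ~~ dominating S.

Definition priv_closed (D : {set 'I_n}) (x : 'I_n) : {set 'I_n} :=
  cnbhd x :\: cnbhdS (D :\ x).
Definition priv_open (D : {set 'I_n}) (x : 'I_n) : {set 'I_n} :=
  priv_closed D x :&: onbhd x.

Definition min_elt (A : {set 'I_n}) : option 'I_n :=
  ohead [seq i <- enum 'I_n | i \in A].

Definition greedy_step (S : {set 'I_n}) : {set 'I_n} :=
  match min_elt [set x in S | dominating (S :\ x)] with
  | Some x => S :\ x
  | None => S
  end.
(* greedy removal; n iterations suffice since each effective step removes
   a vertex, and once no vertex is removable the step is the identity *)
Definition greedy_removal (S : {set 'I_n}) : {set 'I_n} := iter n greedy_step S.

Definition X_step (D : {set 'I_n}) (u v : 'I_n) (X : {set 'I_n}) :=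
  match min_elt (priv_open D u :\: cnbhdS (v |: X)) with
  | Some y => y |: X
  | None => X
  end.
Definition X_uv (D : {set 'I_n}) (u v : 'I_n) : {set 'I_n} :=
  iter n (X_step D u v) set0.

Definition D' (D : {set 'I_n}) (u v : 'I_n) : {set 'I_n} :=
  ((D :\ u) :|: X_uv D u v) :|: [set v].
Definition Dstar (D : {set 'I_n}) (u v : 'I_n) : {set 'I_n} :=
  greedy_removal (D' D u v).
Definition Z_uv (D : {set 'I_n}) (u v : 'I_n) : {set 'I_n} :=
  D' D u v :\: Dstar D u v.

End Defs.

From mathcomp Require Import all_boot.
Set Implicit Arguments. Unset Strict Implicit. Unset Printing Implicit Defensive.

(* Two private neighbours of u are never adjacent (that would close a triangle
   through u), so the greedy construction of X_uv discards nothing and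
   X_uv = P_D(u) \ {v}; hence D' = (D \ u) ∪ P_D(u), which dominates because
   u itself is dominated by w.  Now let z ∉ D* have two neighbours c1 ≠ c2
   outside N[u] that are D*-private for x1, x2 ∈ N(u).  If x1 = x2 then
   z c1 x1 c2 is a 4-cycle; otherwise privacy keeps c1 off N[x2] and c2 off
   N[x1], and u x1 c1 z c2 x2 is a 6-cycle.  Girth at least 7 excludes both. *)

Lemma iter_saturate (T : finType) (f : {set T} -> {set T}) (Q : {set T}) :
  (forall X : {set T}, X \subset Q ->
     [/\ X \subset f X, f X \subset Q & X != Q -> f X != X]) ->
  iter #|T| f set0 = Q.
Proof.
move=> fP.
have inv k : iter k f set0 \subset Q /\
             (iter k f set0 = Q \/ k <= #|iter k f set0|).
  elim: k => [|k [sXQ IH]] /=; first by split; [exact: sub0set | right].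
  set X := iter k f set0 in sXQ IH *.
  have [sXfX sfXQ grow] := fP X sXQ.
  split=> //; have [XQ|nXQ] := eqVneq X Q.
    by left; apply/eqP; rewrite eqEsubset sfXQ -{1}XQ.
  right; case: IH => [/eqP|leX]; first by rewrite (negbTE nXQ).
  apply: leq_ltn_trans leX (proper_card _).
  by rewrite properEneq eq_sym grow.
have [sXQ [//|leX]] := inv #|T|.
apply/eqP; rewrite eqEcard sXQ.
exact: leq_trans (max_card _) leX.
Qed.

Variant min_elt_spec n (A : {set 'I_n}) : option 'I_n -> Type :=
  | MinElt y of y \in A : min_elt_spec A (Some y)
  | NoMinElt of A = set0 : min_elt_spec A None.

Lemma min_eltP n (A : {set 'I_n}) : min_elt_spec A (min_elt A).
Proof.
rewrite /min_elt; case E: [seq i <- enum 'I_n | i \in A] => [|y s] /=.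
  constructor; apply/setP=> y; rewrite in_set0; apply/negbTE/negP=> yA.
  have : y \in [seq i <- enum 'I_n | i \in A] by rewrite mem_filter yA mem_enum.
  by rewrite E.
constructor; have : y \in [seq i <- enum 'I_n | i \in A] by rewrite E mem_head.
by rewrite mem_filter => /andP[].
Qed.

Lemma dominating_iter_greedy_step n (e : rel 'I_n) (S : {set 'I_n}) k :
  dominating e S -> dominating e (iter k (greedy_step e) S).
Proof.
move=> domS; elim: k => [|k domk] //=; rewrite {1}/greedy_step.
by case: min_eltP => [x|//]; rewrite inE => /andP[].
Qed.

Lemma mem_cnbhdS n (e : rel 'I_n) (S : {set 'I_n}) x y :
  x \in S -> y \in cnbhd e x -> y \in cnbhdS e S.
Proof. by move=> xS yx; apply/bigcupP; exists x. Qed.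

Lemma priv_open_notin n (e : rel 'I_n) (S : {set 'I_n}) x :
  dominating e S -> x \notin S -> priv_open e S x = set0.
Proof.
move=> /eqP domS xS; rewrite /priv_open /priv_closed.
have /setDidPl -> : [disjoint S & [set x]] by rewrite disjoint_sym disjoints1.
by rewrite domS setDT set0I.
Qed.

Lemma priv_openP n (e : rel 'I_n) (S : {set 'I_n}) x c :
  c \in priv_open e S x -> e x c /\ (forall y, y \in S -> y != x -> y != c).
Proof.
rewrite !inE => /andP[/andP[cS _] exc]; split=> // y yS yx.
apply: contraNneq cS => <-; apply: (mem_cnbhdS (x := y)); last exact: setU11.
by rewrite !inE yx.
Qed.

Section Graph.

Variables (n : nat) (e : rel 'I_n).
Hypotheses (e_sym : symmetric e) (e_irr : irreflexive e).

Lemma edge_neq x y : e x y -> x != y.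
Proof. by apply: contraTneq => ->; rewrite e_irr. Qed.

Lemma dominating_replace_by_private (D : {set 'I_n}) u w :
  dominating e D -> w \in D -> e u w ->
  dominating e ((D :\ u) :|: priv_open e D u).
Proof.
move=> /eqP domD wD euw; apply/eqP/setP=> y; rewrite inE.
have sub_dom x : x \in D :\ u -> y \in cnbhd e x ->
    y \in cnbhdS e ((D :\ u) :|: priv_open e D u).
  by move=> xD; apply: mem_cnbhdS; rewrite inE xD.
have [yu|nyu] := eqVneq y u.
  apply: (sub_dom w); first by rewrite !inE wD andbT eq_sym edge_neq.
  by rewrite yu !inE e_sym euw orbT.
case yD: (y \in cnbhdS e (D :\ u)).
  by case/bigcupP: yD => x; apply: sub_dom.
have : y \in cnbhdS e D by rewrite domD inE.
case/bigcupP=> x xD yx; have [xu|nxu] := eqVneq x u; last first.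
  by apply: (sub_dom x) => //; rewrite !inE nxu.
apply: (mem_cnbhdS (x := y)); last by rewrite !inE eqxx.
by move: yx; rewrite xu !inE yD (negbTE nyu) /= => uy; rewrite uy orbT.
Qed.

Variable g : nat.
Hypothesis girth_g : girth_ge e g.

Lemma no_triangle a b c : 3 < g -> e a b -> e b c -> e c a -> False.
Proof.
move=> g3 ab bc ca; have := girth_g (s := [:: a; b; c]).
rewrite /= !inE !negb_or edge_neq // (edge_neq bc) eq_sym edge_neq // ab bc ca.
by move=> /(_ isT isT isT); rewrite leqNgt g3.
Qed.

Lemma no_square a b c d : 4 < g ->
  e a b -> e b c -> e c d -> e d a -> a != c -> b != d -> False.
Proof.
move=> g4 ab bc cd da ac bd; have := girth_g (s := [:: a; b; c; d]).
rewrite /= !inE !negb_or ac bd edge_neq // (edge_neq bc) (edge_neq cd).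
rewrite eq_sym edge_neq // ab bc cd da.
by move=> /(_ isT isT isT); rewrite leqNgt g4.
Qed.

Lemma no_hexagon a b c d f h : 6 < g ->
  e a b -> e b c -> e c d -> e d f -> e f h -> e h a ->
  a != c -> a != d -> a != f -> b != d -> b != f -> b != h ->
  c != f -> c != h -> d != h -> False.
Proof.
move=> g6 ab bc cd df fh ha ac ad af bd bf bh cf ch dh.
have := girth_g (s := [:: a; b; c; d; f; h]).
rewrite /= !inE !negb_or ac ad af bd bf bh cf ch dh.
rewrite edge_neq // (edge_neq bc) (edge_neq cd) (edge_neq df) (edge_neq fh).
rewrite eq_sym edge_neq // ab bc cd df fh ha.
by move=> /(_ isT isT isT); rewrite leqNgt g6.
Qed.

Lemma cnbhdS_priv_open (D : {set 'I_n}) u (X : {set 'I_n}) y : 3 < g ->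
  X \subset priv_open e D u -> y \in priv_open e D u ->
  (y \in cnbhdS e X) = (y \in X).
Proof.
move=> g3 sXP yP; apply/bigcupP/idP => [[x xX]|yX]; last first.
  by exists y; rewrite // !inE eqxx.
rewrite !inE => /orP[/eqP -> //|exy]; exfalso.
have [eux _] := priv_openP (subsetP sXP x xX).
have [euy _] := priv_openP yP.
by apply: (no_triangle g3 eux exy); rewrite e_sym.
Qed.

Lemma X_uv_eq (D : {set 'I_n}) u v : 3 < g ->
  v \in priv_open e D u -> X_uv e D u v = priv_open e D u :\ v.
Proof.
move=> g3 vP; rewrite /X_uv -[k in iter k]card_ord.
apply: iter_saturate => X sXQ; rewrite /X_step.
set P := priv_open e D u in vP sXQ *.
have svXP : v |: X \subset P.
  by rewrite subUset sub1set vP (subset_trans sXQ) ?subD1set.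
have -> : P :\: cnbhdS e (v |: X) = (P :\ v) :\: X.
  apply/setP=> y; rewrite !in_setD in_set1.
  case yP: (y \in P); rewrite ?andbF // !andbT.
  by rewrite (cnbhdS_priv_open g3 svXP yP) in_setU1 negb_or andbC.
case: min_eltP => [y|/eqP].
  rewrite inE => /andP[yX yQ]; split; first exact: subsetUr.
    by rewrite subUset sub1set yQ sXQ.
  by move=> _; apply: contraNneq yX => <-; rewrite !inE eqxx.
by rewrite setD_eq0 => sQX; split=> //; rewrite eqEsubset sXQ sQX.
Qed.

Lemma private_common_neighbours_le1 (S A : {set 'I_n}) u z : 6 < g ->
  dominating e S -> z \notin S -> z != u -> A \subset onbhd e u ->
  #|onbhd e z :&: ((\bigcup_(x in A) priv_open e S x) :\: cnbhd e u)| <= 1.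
Proof.
move=> g6 domS zS zu sAu.
have owner c : c \in onbhd e z :&:
    ((\bigcup_(x in A) priv_open e S x) :\: cnbhd e u) ->
  exists x, [/\ e u x, x \in S, e z c & c != u] /\
    (e x c /\ forall y, y \in S -> y != x -> y != c).
  rewrite !inE negb_or => /andP[zc /andP[/andP[cu _] /bigcupP[x xA cP]]].
  exists x; split; last exact: priv_openP.
  split=> //; first by have := subsetP sAu x xA; rewrite inE.
  by apply: contraT => xS; rewrite priv_open_notin ?in_set0 in cP.
rewrite leqNgt; apply/negP=> /card_gt1P [c1 [c2 [c1P c2P c12]]].
have [x1 [[ux1 x1S zc1 c1u] [x1c1 priv1]]] := owner c1 c1P.
have [x2 [[ux2 x2S zc2 c2u] [x2c2 priv2]]] := owner c2 c2P.
have zx1 : z != x1 by apply: contraNneq zS => ->.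
have zx2 : z != x2 by apply: contraNneq zS => ->.
have [x12|x12] := eqVneq x1 x2.
  move: x2c2; rewrite -x12 => x1c2.
  by apply: (no_square (ltnW (ltnW g6)) zc1 _ x1c2 _ zx1 c12); rewrite e_sym.
have x1c2 := priv2 x1 x1S x12.
have x2c1 : x2 != c1 by apply: priv1; rewrite // eq_sym.
apply: (no_hexagon g6 ux1 x1c1 _ zc2 _ _ _ _ _ _ x1c2 x12 c12 _ zx2);
  by rewrite 1?e_sym // eq_sym.
Qed.

End Graph.

Theorem lemma10 (n : nat) (e : rel 'I_n) (D : {set 'I_n}) (u w v : 'I_n) :
  simple_graph e -> girth_ge e 7 ->
  minimal_dominating e D ->
  u \in D -> w \in D -> e u w ->
  v \in priv_open e D u ->
  X_uv e D u v = priv_open e D u :\ v /\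
  forall z, z \in Z_uv e D u v ->
    #| onbhd e z :&:
       ((\bigcup_(x in v |: X_uv e D u v) priv_open e (Dstar e D u v) x)
          :\: cnbhd e u) | <= 1.
Proof.
move=> [e_sym e_irr] girth7 [domD _] _ wD euw vP.
have XE := X_uv_eq e_sym e_irr girth7 isT vP.
have PE : v |: X_uv e D u v = priv_open e D u by rewrite XE setD1K.
have D'E : D' e D u v = (D :\ u) :|: priv_open e D u.
  by rewrite /D' -setUA (setUC (X_uv _ _ _ _)) PE.
have domDstar : dominating e (Dstar e D u v).
  apply: dominating_iter_greedy_step; rewrite D'E.
  exact: (dominating_replace_by_private e_sym e_irr domD wD euw).
split=> // z; rewrite /Z_uv inE => /andP[zDstar zD'].
apply: (private_common_neighbours_le1 e_sym e_irr girth7) => //;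
  last by rewrite PE subsetIr.
by apply: contraTneq zD' => ->; rewrite D'E !inE eqxx e_irr andbF.
Qed.
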